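(* Let $(f^*,g^* )$ be a stationary $\hat\beta$-discounted Nash equilibrium of a two-player discrete time stochastic game for some $\hat\beta\in[0,1)$, and suppose: (D1) $(f^*,g^* )$ is pure, i.e. for each $s\in S$ there are actions $a^1_s\in A^1(s)$, $a^2_s\in A^2(s)$ with $f^*(s,a^1_s)=1$, $g^*(s,a^2_s)=1$; (D2) $P(f^*,g^* )=I$, i.e. every state is absorbing under $(f^*,g^* )$; (D3) for all $s\in S$, $a^1\in A^1(s)$: $r^1(s,a^1,a^2_s)\ge\sum_{s'\in S}p(s'\mid s,a^1,a^2_s)\,r^1(s',a^1_{s'},a^2_{s'})$, and for all $s\in S$, $a^2\in A^2(s)$: $r^2(s,a^1_s,a^2)\ge\sum_{s'\in S}p(s'\mid s,a^1_s,a^2)\,r^2(s',a^1_{s'},a^2_{s'})$. Then $(f^*,g^* )$ is a Blackwell-Nash equilibrium.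
   Context: A two-player discrete time stochastic game consists of a finite state set $S$, finite nonempty action sets $A^1(s),A^2(s)$ for each $s\in S$, reward functions $r^i(s,a^1,a^2)$ for $i=1,2$, and transition probabilities $p(s'\mid s,a^1,a^2)$. A stationary strategy of player 1 is $f=(f(s))_{s\in S}$ with $f(s)$ a probability distribution on $A^1(s)$, $f(s,a^1)$ denoting the probability of $a^1$; similarly $g$ for player 2. For a stationary pair $(f,g)$ let $r^i(s,f,g)=\sum_{a^1,a^2}f(s,a^1)g(s,a^2)r^i(s,a^1,a^2)$ and $P(f,g)$ the $|S|\times|S|$ matrix with entries $P(f,g)_{ss'}=\sum_{a^1,a^2}f(s,a^1)g(s,a^2)p(s'\mid s,a^1,a^2)$. For $\beta\in[0,1)$ the $\beta$-discounted payoff vector of player $i$ is $v^i_\beta(f,g)=(I-\beta P(f,g))^{-1}r^i(f,g)$, with $s$-th component $v^i_\beta(s,f,g)$. A stationary pair $(f^*,g^* )$ is a $\beta$-discounted Nash equilibrium if for all $s\in S$, $v^1_\beta(s,f^*,g^* )\ge v^1_\beta(s,f,g^* )$ for all stationary $f$ and $v^2_\beta(s,f^*,g^* )\ge v^2_\beta(s,f^*,g)$ for all stationary $g$. A stationary pair is a Blackwell-Nash equilibrium (BNE) if there is $\beta_0\in[0,1)$ such that it is a $\beta$-discounted Nash equilibrium for every $\beta\in[\beta_0,1)$. *)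

(* Real numbers are abstracted as an arbitrary real field
   R : realFieldType (the statement is purely algebraic/order-theoretic). *)
From HB Require Import structures.
From mathcomp Require Import all_boot all_order all_algebra.
Unset Printing Implicit Defensive.
Import Order.TTheory GRing.Theory Num.Theory.
Local Open Scope ring_scope.

Section Game.
Variables (R : realFieldType) (n : nat) (A1 A2 : 'I_n -> finType).

(* transition law p s a1 a2 s' = p(s' | s, a1, a2) *)
Definition transition_law (p : forall s, A1 s -> A2 s -> 'I_n -> R) : Prop :=
  forall s (a1 : A1 s) (a2 : A2 s),
    (forall s', 0 <= p s a1 a2 s') /\ \sum_(s' < n) p s a1 a2 s' = 1.

Definition stationary1 (f : forall s, A1 s -> R) : Prop :=
  forall s, (forall a, 0 <= f s a) /\ \sum_(a : A1 s) f s a = 1.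
Definition stationary2 (g : forall s, A2 s -> R) : Prop :=
  forall s, (forall a, 0 <= g s a) /\ \sum_(a : A2 s) g s a = 1.

Variable (p : forall s, A1 s -> A2 s -> 'I_n -> R).

Definition rew (r : forall s, A1 s -> A2 s -> R)
    (f : forall s, A1 s -> R) (g : forall s, A2 s -> R) : 'cV[R]_n :=
  \col_(s < n) \sum_(a1 : A1 s) \sum_(a2 : A2 s) f s a1 * g s a2 * r s a1 a2.

Definition Pmx (f : forall s, A1 s -> R) (g : forall s, A2 s -> R) : 'M[R]_n :=
  \matrix_(s < n, s' < n) \sum_(a1 : A1 s) \sum_(a2 : A2 s) f s a1 * g s a2 * p s a1 a2 s'.

Definition vdisc (r : forall s, A1 s -> A2 s -> R) (beta : R)
    (f : forall s, A1 s -> R) (g : forall s, A2 s -> R) : 'cV[R]_n :=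
  invmx (1%:M - beta *: Pmx f g) *m rew r f g.

Definition discNash (r1 r2 : forall s, A1 s -> A2 s -> R) (beta : R)
    (fs : forall s, A1 s -> R) (gs : forall s, A2 s -> R) : Prop :=
  forall s : 'I_n,
    (forall f, stationary1 f -> vdisc r1 beta f gs s 0 <= vdisc r1 beta fs gs s 0) /\
    (forall g, stationary2 g -> vdisc r2 beta fs g s 0 <= vdisc r2 beta fs gs s 0).

Definition BlackwellNash (r1 r2 : forall s, A1 s -> A2 s -> R)
    (fs : forall s, A1 s -> R) (gs : forall s, A2 s -> R) : Prop :=
  exists beta0 : R, 0 <= beta0 /\ beta0 < 1 /\
    forall beta : R, beta0 <= beta -> beta < 1 -> discNash r1 r2 beta fs gs.

End Game.

Arguments transition_law {R n A1 A2} p.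
Arguments stationary1 {R n A1} f.
Arguments stationary2 {R n A2} g.
Arguments rew {R n A1 A2} r f g.
Arguments Pmx {R n A1 A2} p f g.
Arguments vdisc {R n A1 A2} p r beta f g.
Arguments discNash {R n A1 A2} p r1 r2 beta fs gs.
Arguments BlackwellNash {R n A1 A2} p r1 r2 fs gs.

From HB Require Import structures.
From mathcomp Require Import all_boot all_order all_algebra.
From mathcomp Require Import ring lra.
Import Order.TTheory GRing.Theory Num.Theory.
Local Open Scope ring_scope.

(* Under (fs, gs) every state is absorbing, so the equilibrium value at any
   discount factor beta is w / (1 - beta), with w s = r s (a1s s) (a2s s).
   By the minimum principle for I - beta P_f, a deviation f of player 1 is
   unprofitable at beta as soon as (1 - beta) r_f + beta P_f w <= w pointwise.
   At beta = hbeta this follows from the equilibrium property applied to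
   deviations at a single state, and condition (D3), i.e. P_f w <= r_f, makes
   the left-hand side nonincreasing in beta.  Player 2 is handled by
   exchanging the roles of the players. *)

Section MatrixEntries.
Context {R : pzRingType} {n : nat}.

Lemma subcvE (u v : 'cV[R]_n) i : (u - v) i 0 = u i 0 - v i 0.
Proof. by rewrite !mxE. Qed.

Lemma mulmx_row_eq {A B : 'M[R]_n} {k : 'I_n} (x : 'cV[R]_n) :
  row k A = row k B -> (A *m x) k 0 = (B *m x) k 0.
Proof.
move=> AB; have := congr1 (fun C : 'rV_1 => C 0 0) (congr1 (mulmx^~ x) AB).
by rewrite /= -!row_mul !mxE.
Qed.

Lemma mulmx_row1 {A : 'M[R]_n} {k : 'I_n} (x : 'cV[R]_n) :
  row k A = row k 1%:M -> (A *m x) k 0 = x k 0.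
Proof. by move/(mulmx_row_eq x)->; rewrite mul1mx. Qed.

End MatrixEntries.

Section DiscountedResolvent.
Context {R : realFieldType} {n : nat} {P : 'M[R]_n} {beta : R}.
Hypotheses (P_ge0 : forall i j, 0 <= P i j) (P_sum1 : forall i, \sum_j P i j = 1).
Hypotheses (beta_ge0 : 0 <= beta) (beta_lt1 : beta < 1).

Local Notation M := (1%:M - beta *: P).

Lemma discount_mxE (x : 'cV[R]_n) i : (M *m x) i 0 = x i 0 - beta * (P *m x) i 0.
Proof. by rewrite mulmxBl mul1mx -scalemxAl !mxE. Qed.

Lemma discount_scaled_mxE (w : 'cV[R]_n) i :
  (M *m ((1 - beta)^-1 *: w)) i 0 * (1 - beta) = w i 0 - beta * (P *m w) i 0.
Proof.
have beta_neq1 : 1 - beta != 0 by rewrite subr_eq0 eq_sym lt_eqF.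
by rewrite -scalemxAr mxE discount_mxE mulrC mulrA mulfV ?mul1r.
Qed.

Lemma discount_min_principle (x : 'cV[R]_n) :
  (forall i, 0 <= (M *m x) i 0) -> forall i, 0 <= x i 0.
Proof.
move=> Mx_ge0 i.
have [m _ min_m] := @arg_minP _ _ _ i xpredT (fun k => x k 0) isT.
suff xm_ge0 : 0 <= x m 0 by apply: le_trans xm_ge0 (min_m i isT).
rewrite leNgt; apply/negP => xm_lt0.
have Px_ge : x m 0 <= (P *m x) m 0.
  rewrite mxE -[leLHS]mul1r -(P_sum1 m) big_distrl /=.
  by apply: ler_sum => j _; apply: ler_wpM2l => //; apply: min_m.
have := ler_wpM2l beta_ge0 Px_ge; have := Mx_ge0 m; rewrite discount_mxE.
have : 0 < (1 - beta) * - x m 0 by rewrite mulr_gt0 // ?subr_gt0 ?oppr_gt0.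
lra.
Qed.

Lemma discount_unitmx : M \in unitmx.
Proof.
rewrite -unitmx_tr -row_free_unit; apply: inj_row_free => v vM0.
have Mv0 : M *m v^T = 0 by rewrite -[LHS]trmxK trmx_mul trmxK vM0 trmx0.
have vT_ge0 : forall k, 0 <= v^T k 0.
  by apply: discount_min_principle => k; rewrite Mv0 mxE.
have vT_le0 : forall k, 0 <= (- v^T) k 0.
  by apply: discount_min_principle => k; rewrite mulmxN Mv0 oppr0 mxE.
apply/rowP => j; have := vT_ge0 j; have := vT_le0 j.
by rewrite !mxE oppr_ge0 => le0 ge0; apply/eqP; rewrite eq_le le0 ge0.
Qed.

Lemma discount_value_le (r u : 'cV[R]_n) :
  (forall i, r i 0 <= (M *m u) i 0) -> forall i, (invmx M *m r) i 0 <= u i 0.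
Proof.
move=> r_le i; have := @discount_min_principle (u - invmx M *m r) _ i.
rewrite subcvE subr_ge0; apply => k.
by rewrite mulmxBr mulKVmx ?discount_unitmx // subcvE subr_ge0.
Qed.

Lemma discount_one_row_ge0 (s : 'I_n) (x : 'cV[R]_n) :
  (forall k, k != s -> row k P = row k 1%:M) ->
  (forall k, k != s -> (M *m x) k 0 = 0) -> 0 <= x s 0 -> 0 <= (M *m x) s 0.
Proof.
move=> P_id Mx0 xs_ge0.
have x0 k : k != s -> x k 0 = 0.
  move=> ks; have := Mx0 k ks; rewrite discount_mxE mulmx_row1 ?P_id //.
  rewrite -[X in X - _]mul1r -mulrBl => /eqP; rewrite mulf_eq0 subr_eq0.
  by rewrite eq_sym lt_eqF //= => /eqP.
have Pss_le1 : P s s <= 1.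
  rewrite -(P_sum1 s) (bigD1 s) //= lerDl.
  by apply: sumr_ge0 => j _.
rewrite discount_mxE; have -> : (P *m x) s 0 = P s s * x s 0.
  rewrite mxE (bigD1 s) //= big1 ?addr0 // => j js.
  by rewrite x0 ?mulr0.
rewrite mulrA -[X in X - _]mul1r -mulrBl mulr_ge0 // subr_ge0.
by apply: le_trans (ltW beta_lt1); rewrite -[leRHS]mulr1 ler_wpM2l.
Qed.

End DiscountedResolvent.

Lemma sum_pure {R : numDomainType} {A : finType} {d : A -> R} {a0 : A} :
  (forall a, 0 <= d a) -> \sum_a d a = 1 -> d a0 = 1 ->
  forall F, \sum_a d a * F a = F a0.
Proof.
move=> d_ge0 d_sum1 da0 F; rewrite (bigD1 a0) //= da0 mul1r.
rewrite (bigD1 a0) //= da0 -[RHS]addr0 in d_sum1.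
have /psumr_eq0P d0 := addrI _ d_sum1.
by rewrite big1 ?addr0 // => a a_neq0; rewrite d0 ?mul0r // => b _; apply: d_ge0.
Qed.

Section StationaryPayoffs.
Context {R : realFieldType} {n : nat} {A1 A2 : 'I_n -> finType}.
Variable p : forall s, A1 s -> A2 s -> 'I_n -> R.

Lemma Pmx_ge0 {f : forall s, A1 s -> R} {g : forall s, A2 s -> R} :
  transition_law p -> stationary1 f -> stationary2 g -> forall i j, 0 <= Pmx p f g i j.
Proof.
move=> p_law f_stat g_stat i j; rewrite mxE.
apply: sumr_ge0 => a1 _; apply: sumr_ge0 => a2 _.
by rewrite !mulr_ge0 ?(f_stat i).1 ?(g_stat i).1 ?(p_law i a1 a2).1.
Qed.

Lemma Pmx_sum1 {f : forall s, A1 s -> R} {g : forall s, A2 s -> R} :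
  transition_law p -> stationary1 f -> stationary2 g ->
  forall i, \sum_j Pmx p f g i j = 1.
Proof.
move=> p_law f_stat g_stat i; under eq_bigr do rewrite mxE.
rewrite exchange_big -[RHS](f_stat i).2 /=; apply: eq_bigr => a1 _.
rewrite exchange_big -[RHS]mulr1 -(g_stat i).2 big_distrr /=; apply: eq_bigr => a2 _.
by rewrite -big_distrr /= (p_law i a1 a2).2 mulr1.
Qed.

Lemma row_Pmx_eq (g : forall s, A2 s -> R) {f1 f2 : forall s, A1 s -> R} {s : 'I_n} :
  f1 s =1 f2 s -> row s (Pmx p f1 g) = row s (Pmx p f2 g).
Proof.
by move=> f12; apply/rowP => j; rewrite !mxE; apply: eq_bigr => a _; rewrite f12.
Qed.

Lemma rew_eq (r : forall s, A1 s -> A2 s -> R) (g : forall s, A2 s -> R)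
    {f1 f2 : forall s, A1 s -> R} {s : 'I_n} :
  f1 s =1 f2 s -> rew r f1 g s 0 = rew r f2 g s 0.
Proof. by move=> f12; rewrite !mxE; apply: eq_bigr => a _; rewrite f12. Qed.

Lemma vdisc_absorbing (r : forall s, A1 s -> A2 s -> R) (beta : R)
    {f : forall s, A1 s -> R} {g : forall s, A2 s -> R} :
  Pmx p f g = 1%:M -> vdisc p r beta f g = (1 - beta)^-1 *: rew r f g.
Proof.
by move=> P1; rewrite /vdisc P1 scalemx1 -raddfB invmx_scalar mul_scalar_mx.
Qed.

Lemma Pmx_against_pure (f : forall s, A1 s -> R) {g : forall s, A2 s -> R}
    {a2s : forall s, A2 s} : stationary2 g -> (forall s, g s (a2s s) = 1) ->
  forall s j, Pmx p f g s j = \sum_a f s a * p s a (a2s s) j.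
Proof.
move=> g_stat g_pure s j; rewrite mxE; apply: eq_bigr => a _.
under eq_bigr do rewrite -mulrA; rewrite -big_distrr /=.
by rewrite (sum_pure (g_stat s).1 (g_stat s).2 (g_pure s)).
Qed.

Lemma rew_against_pure (r : forall s, A1 s -> A2 s -> R) (f : forall s, A1 s -> R)
    {g : forall s, A2 s -> R} {a2s : forall s, A2 s} :
  stationary2 g -> (forall s, g s (a2s s) = 1) ->
  forall s, rew r f g s 0 = \sum_a f s a * r s a (a2s s).
Proof.
move=> g_stat g_pure s; rewrite mxE; apply: eq_bigr => a _.
under eq_bigr do rewrite -mulrA; rewrite -big_distrr /=.
by rewrite (sum_pure (g_stat s).1 (g_stat s).2 (g_pure s)).
Qed.

Lemma rew_pure (r : forall s, A1 s -> A2 s -> R)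
    {f : forall s, A1 s -> R} {g : forall s, A2 s -> R}
    {a1s : forall s, A1 s} {a2s : forall s, A2 s} :
  stationary1 f -> stationary2 g ->
  (forall s, f s (a1s s) = 1) -> (forall s, g s (a2s s) = 1) ->
  forall s, rew r f g s 0 = r s (a1s s) (a2s s).
Proof.
move=> f_stat g_stat f_pure g_pure s; rewrite (rew_against_pure r f g_stat g_pure).
by rewrite (sum_pure (f_stat s).1 (f_stat s).2 (f_pure s)).
Qed.

Definition flip_actions {T : Type} (q : forall s, A1 s -> A2 s -> T) :
  forall s, A2 s -> A1 s -> T := fun s a2 a1 => q s a1 a2.

Lemma transition_law_flip : transition_law p -> transition_law (flip_actions p).
Proof. by move=> p_law s a2 a1; apply: p_law. Qed.

Lemma Pmx_flip (f : forall s, A1 s -> R) (g : forall s, A2 s -> R) :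
  Pmx p f g = Pmx (flip_actions p) g f.
Proof.
apply/matrixP => i j; rewrite !mxE exchange_big; apply: eq_bigr => a2 _.
by apply: eq_bigr => a1 _; rewrite [g i a2 * _]mulrC.
Qed.

Lemma rew_flip (r : forall s, A1 s -> A2 s -> R)
    (f : forall s, A1 s -> R) (g : forall s, A2 s -> R) :
  rew r f g = rew (flip_actions r) g f.
Proof.
apply/matrixP => i j; rewrite !mxE exchange_big; apply: eq_bigr => a2 _.
by apply: eq_bigr => a1 _; rewrite [g i a2 * _]mulrC.
Qed.

Lemma vdisc_flip (r : forall s, A1 s -> A2 s -> R) (beta : R)
    (f : forall s, A1 s -> R) (g : forall s, A2 s -> R) :
  vdisc p r beta f g = vdisc (flip_actions p) (flip_actions r) beta g f.
Proof. by rewrite /vdisc Pmx_flip rew_flip. Qed.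

End StationaryPayoffs.

Section OneSidedDeviation.
Context {R : realFieldType} {n : nat} {A1 A2 : 'I_n -> finType}.
Variable p : forall s, A1 s -> A2 s -> 'I_n -> R.
Variable r : forall s, A1 s -> A2 s -> R.
Variables (fs : forall s, A1 s -> R) (gs : forall s, A2 s -> R).
Variables (a1s : forall s, A1 s) (a2s : forall s, A2 s) (hbeta : R).
Hypothesis p_law : transition_law p.
Hypotheses (fs_stat : stationary1 fs) (gs_stat : stationary2 gs).
Hypotheses (fs_pure : forall s, fs s (a1s s) = 1) (gs_pure : forall s, gs s (a2s s) = 1).
Hypothesis absorbing : Pmx p fs gs = 1%:M.
Hypothesis reward_ge_continuation : forall s (a1 : A1 s),
  \sum_(s' < n) p s a1 (a2s s) s' * r s' (a1s s') (a2s s') <= r s a1 (a2s s).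
Hypotheses (hbeta_ge0 : 0 <= hbeta) (hbeta_lt1 : hbeta < 1).
Hypothesis best_response_hbeta : forall s (f : forall s, A1 s -> R),
  stationary1 f -> vdisc p r hbeta f gs s 0 <= vdisc p r hbeta fs gs s 0.

Let w := rew r fs gs.

Lemma Pmx_mul_value_le_rew (f : forall s, A1 s -> R) :
  stationary1 f -> forall s, (Pmx p f gs *m w) s 0 <= rew r f gs s 0.
Proof.
move=> f_stat s; rewrite (rew_against_pure r f gs_stat gs_pure) mxE.
under eq_bigr do rewrite (Pmx_against_pure p f gs_stat gs_pure) big_distrl /=.
rewrite exchange_big /=; apply: ler_sum => a _.
under eq_bigr do rewrite -mulrA (rew_pure r fs_stat gs_stat fs_pure gs_pure).
by rewrite -big_distrr /= ler_wpM2l ?(f_stat s).1 ?reward_ge_continuation.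
Qed.

Definition deviate (f : forall s, A1 s -> R) (s : 'I_n) : forall k, A1 k -> R :=
  fun k => if k == s then f k else fs k.

Lemma deviate_stationary f s : stationary1 f -> stationary1 (deviate f s).
Proof. by move=> f_stat k; rewrite /deviate; case: (k == s). Qed.

Lemma deviate_at f s : deviate f s s =1 f s.
Proof. by move=> a; rewrite /deviate eqxx. Qed.

Lemma deviate_off {f s k} : k != s -> deviate f s k =1 fs k.
Proof. by move=> ks a; rewrite /deviate (negbTE ks). Qed.

Lemma one_state_deviation_bound (f : forall s, A1 s -> R) s : stationary1 f ->
  (1 - hbeta) * rew r f gs s 0 + hbeta * (Pmx p f gs *m w) s 0 <= w s 0.
Proof.
move=> f_stat; set fd := deviate f s.
have fd_stat : stationary1 fd by apply: deviate_stationary.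
have Pd_ge0 := Pmx_ge0 p p_law fd_stat gs_stat.
have Pd_sum1 := Pmx_sum1 p p_law fd_stat gs_stat.
have hbeta_neq1 : 1 - hbeta != 0 by rewrite subr_eq0 eq_sym lt_eqF.
set Md := 1%:M - hbeta *: Pmx p fd gs.
set u := (1 - hbeta)^-1 *: w.
(* [Md *m e] vanishes off [s], where [fd] agrees with the absorbing [fs], and
   [0 <= e s 0] is the equilibrium property at [s]. *)
set e := u - vdisc p r hbeta fd gs.
have MdeE : Md *m e = Md *m u - rew r fd gs.
  by rewrite mulmxBr mulKVmx // discount_unitmx.
have Pd_id k : k != s -> row k (Pmx p fd gs) = row k 1%:M.
  by move=> ks; rewrite (row_Pmx_eq p gs (deviate_off ks)) absorbing.
have Mde_ge0 : 0 <= (Md *m e) s 0.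
  apply: (discount_one_row_ge0 Pd_ge0 Pd_sum1 hbeta_ge0 hbeta_lt1 _ _ Pd_id).
  - move=> k ks; rewrite MdeE subcvE; apply: (mulIf hbeta_neq1).
    rewrite mul0r mulrBl discount_scaled_mxE // mulmx_row1 ?Pd_id //.
    by rewrite (rew_eq r gs (deviate_off ks)) -/w; ring.
  - rewrite subcvE subr_ge0 /u -(vdisc_absorbing p r hbeta absorbing).
    exact: best_response_hbeta.
have hbeta_pos : 0 < 1 - hbeta by rewrite subr_gt0.
move: Mde_ge0; rewrite MdeE subcvE subr_ge0 -(ler_pM2r hbeta_pos).
rewrite discount_scaled_mxE //.
rewrite (rew_eq r gs (deviate_at f s)).
rewrite (mulmx_row_eq _ (row_Pmx_eq p gs (deviate_at f s))).
lra.
Qed.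

Lemma best_response_for_larger_discount (beta : R) : hbeta <= beta -> beta < 1 ->
  forall s (f : forall s, A1 s -> R),
    stationary1 f -> vdisc p r beta f gs s 0 <= vdisc p r beta fs gs s 0.
Proof.
move=> hbeta_le beta_lt1 s f f_stat.
have beta_ge0 : 0 <= beta := le_trans hbeta_ge0 hbeta_le.
have beta_pos : 0 < 1 - beta by rewrite subr_gt0.
rewrite (vdisc_absorbing p r beta absorbing).
apply: (discount_value_le (Pmx_ge0 p p_law f_stat gs_stat)
  (Pmx_sum1 p p_law f_stat gs_stat) beta_ge0 beta_lt1) => k.
rewrite -(ler_pM2r beta_pos) discount_scaled_mxE //.
have dev := one_state_deviation_bound f k f_stat.
have cont := Pmx_mul_value_le_rew f f_stat k.
have : 0 <= (beta - hbeta) * (rew r f gs k 0 - (Pmx p f gs *m w) k 0).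
  by rewrite mulr_ge0 // subr_ge0.
lra.
Qed.

End OneSidedDeviation.

Arguments best_response_for_larger_discount {R n A1 A2} p r {fs gs a1s a2s hbeta}.

Theorem theorem3 (R : realFieldType) (n : nat) (A1 A2 : 'I_n -> finType)
    (p : forall s, A1 s -> A2 s -> 'I_n -> R)
    (r1 r2 : forall s, A1 s -> A2 s -> R)
    (fs : forall s, A1 s -> R) (gs : forall s, A2 s -> R)
    (hbeta : R) (a1s : forall s, A1 s) (a2s : forall s, A2 s) :
  (forall s, 0 < #|A1 s|)%N -> (forall s, 0 < #|A2 s|)%N ->
  transition_law p ->
  stationary1 fs -> stationary2 gs ->
  0 <= hbeta -> hbeta < 1 ->
  discNash p r1 r2 hbeta fs gs ->
  (* (D1) pure *)
  (forall s, fs s (a1s s) = 1) -> (forall s, gs s (a2s s) = 1) ->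
  (* (D2) every state absorbing *)
  Pmx p fs gs = 1%:M ->
  (* (D3) *)
  (forall s (a1 : A1 s),
     \sum_(s' < n) p s a1 (a2s s) s' * r1 s' (a1s s') (a2s s') <= r1 s a1 (a2s s)) ->
  (forall s (a2 : A2 s),
     \sum_(s' < n) p s (a1s s) a2 s' * r2 s' (a1s s') (a2s s') <= r2 s (a1s s) a2) ->
  BlackwellNash p r1 r2 fs gs.
Proof.
move=> _ _ p_law fs_stat gs_stat hb_ge0 hb_lt1 nash fs_pure gs_pure absorbing.
move=> D3_1 D3_2.
exists hbeta; split=> //; split=> // beta hb_le beta_lt1 s; split.
  apply: (best_response_for_larger_discount p r1 p_law fs_stat gs_stat fs_pure
    gs_pure absorbing D3_1 hb_ge0 hb_lt1 _ _ hb_le beta_lt1).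
  by move=> k f; apply: (nash k).1.
move=> g g_stat; rewrite (vdisc_flip p r2 beta fs g) (vdisc_flip p r2 beta fs gs).
apply: (best_response_for_larger_discount (flip_actions p) (flip_actions r2)
  (transition_law_flip p p_law) gs_stat fs_stat gs_pure fs_pure _ D3_2
  hb_ge0 hb_lt1 _ _ hb_le beta_lt1 s g g_stat).
- by rewrite -Pmx_flip.
- by move=> k g' g'_stat; rewrite -!(vdisc_flip p r2 hbeta fs); apply: (nash k).2.
Qed.
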